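(* For every $r\in\mathbb{N}$, $0\le l\le r-1$ and $z\in\mathbb{C}$, $\lim_{q\uparrow1}P^l_{q,r}(z)=P^l_r(z)$.
   Context: $0<q<1$, $[w]_q:=(1-q^w)/(1-q)$, $[n]_q!:=[n]_q\cdots[1]_q$. For $0\le l\le r-2$, $P^l_{q,r}(z):=\frac{(-1)^{r-1-l}}{[r-1]_q!}\sum_{1\le m_1<\cdots<m_{r-1-l}\le r-1}q^{m_1+\cdots+m_{r-1-l}}[z-m_1]_q\cdots[z-m_{r-1-l}]_q$, and $P^{r-1}_{q,r}(z):=1/[r-1]_q!$. The Stirling numbers of the first kind $s(l,j)$ are defined by $x(x+1)\cdots(x+l-1)=\sum_{j=0}^l s(l,j)x^j$, and $P^l_r(z):=\frac{1}{(r-1)!}\sum_{j=l}^{r-1}\binom{j}{l}s(r,j+1)(-z)^{j-l}$. *)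

From HB Require Import structures.
From mathcomp Require Import all_boot all_order all_algebra.
From mathcomp Require Import all_classical all_reals all_analysis.
From mathcomp Require Import complex.
Set Implicit Arguments. Unset Strict Implicit. Unset Printing Implicit Defensive.
Import Order.TTheory GRing.Theory Num.Theory.
Import numFieldTopology.Exports numFieldNormedType.Exports.

HB.instance Definition _ (R : rcfType) :=
  PseudoPointedMetric.copy R[i] (R[i] : numClosedFieldType)^o.
Local Open Scope classical_set_scope.
Local Open Scope ring_scope.

Definition realC (R : realType) (x : R) : R[i] := Complex x 0.

(* q^w for real q > 0 and complex w : exp(w ln q), written via
   exp(a + i b) = e^a (cos b + i sin b). *)
Definition cpow (R : realType) (q : R) (w : R[i]) : R[i] :=
  Complex (expR (complex.Re w * ln q) * cos (complex.Im w * ln q))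
          (expR (complex.Re w * ln q) * sin (complex.Im w * ln q)).

Definition qnum (R : realType) (q : R) (w : R[i]) : R[i] :=
  (1 - cpow q w) / realC (1 - q).

Definition qfact (R : realType) (q : R) (n : nat) : R[i] :=
  \prod_(1 <= k < n.+1) qnum q k%:R.

(* P^l_{q,r}(z): for l = r-1 it is 1/[r-1]_q!; for 0 <= l <= r-2 it is
   (-1)^{r-1-l}/[r-1]_q! * sum over 1 <= m_1 < ... < m_{r-1-l} <= r-1 of
   prod_k q^{m_k} [z - m_k]_q.  The increasing tuples (m_k) are encoded as
   subsets A of 'I_(r-1) of cardinality r-1-l, with m = i.+1 for i in A. *)
Definition Pq (R : realType) (q : R) (r l : nat) (z : R[i]) : R[i] :=
  if l == r.-1 then (qfact q r.-1)^-1
  else (-1) ^+ (r.-1 - l) / qfact q r.-1 *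
       \sum_(A : {set 'I_r.-1} | #|A| == (r.-1 - l)%N)
          \prod_(i in A) (realC (q ^+ i.+1) * qnum q (z - (i.+1)%:R)).

Definition stirling1 (l j : nat) : nat :=
  ((\prod_(i < l) ('X + (i : nat)%:P) : {poly nat})`_j)%R.

Definition Pr (R : realType) (r l : nat) (z : R[i]) : R[i] :=
  ((r.-1)`!%:R)^-1 *
  \sum_(l <= j < r) ('C(j, l)%:R * (stirling1 r j.+1)%:R * (- z) ^+ (j - l)).

(** By Vieta's formulas the limit P^l_r(z) equals
    (-1)^(r-1-l)/(r-1)! * e_(r-1-l)(z-1, ..., z-(r-1)): the elementary symmetric
    function is a coefficient of prod_i (X - (z - i)) = f(X - z) with
    f = prod_(i<r-1) (X + i + 1), the coefficients of f are the Stirling numbers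
    s(r, j+1), and expanding f(X - z) in powers of X gives the binomials.
    On the other side, [w]_q is the left difference quotient at q = 1 of
    q |-> q^w, whose derivative there is w, and q^m -> 1; since P^l_(q,r)(z) is
    built from these by finite sums, products and the inverse of [r-1]_q! -> (r-1)!,
    it converges to the same expression. *)
From HB Require Import structures.
From mathcomp Require Import all_boot all_order all_algebra.
From mathcomp Require Import all_classical all_reals all_analysis.
From mathcomp Require Import complex.
From mathcomp Require Import ring lra.
Import Order.TTheory GRing.Theory Num.Theory.
Import numFieldTopology.Exports numFieldNormedType.Exports.
Local Open Scope classical_set_scope.
Local Open Scope ring_scope.

Section StirlingShift.
Variable K : comNzRingType.
Implicit Types (c z : K) (p : {poly K}).

Lemma coef_prod_ord_XsubC n l (c : nat -> K) : (l <= n)%N ->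
  (\prod_(i < n) ('X - (c i)%:P))`_l =
  (-1) ^+ (n - l) * \sum_(A : {set 'I_n} | #|A| == (n - l)%N) \prod_(i in A) c i.
Proof.
move=> le_ln; have := @coef_prod_XsubC _ (mkseq c n) l.
rewrite size_mkseq big_map -{2}[n]subn0 -/(index_iota 0 n) big_mkord.
move=> /(_ le_ln) ->.
by congr (_ * _); apply: eq_bigr => A _; apply: eq_bigr => i _; rewrite nth_mkseq.
Qed.

Lemma coef_XaddC_exp c j l :
  (('X + c%:P) ^+ j)`_l = 'C(j, l)%:R * c ^+ (j - l).
Proof.
elim: j l => [|j IHj] [|l].
- by rewrite expr0 coef1 mulr1.
- by rewrite expr0 coef1 mul0r.
- by rewrite exprSr mulrDr coefD coefMX coefMC add0r IHj !bin0 !subn0 !mul1r exprSr.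
rewrite exprSr mulrDr coefD coefMX coefMC /= !IHj binS natrD subSS mulrDl addrC.
congr (_ + _); rewrite -mulrA; case: (ltnP l j) => [lt_lj|le_jl].
  by rewrite -exprSr subnSK.
by rewrite bin_small ?ltnS // !mul0r.
Qed.

Lemma coef_comp_XaddC p c l :
  (p \Po ('X + c%:P))`_l = \sum_(j < size p) p`_j * ('C(j, l)%:R * c ^+ (j - l)).
Proof. by rewrite coef_comp_poly; apply: eq_bigr => j _; rewrite coef_XaddC_exp. Qed.

Lemma stirling1S_coef n j :
  (stirling1 n.+1 j.+1)%:R = (\prod_(i < n) ('X + (i.+1)%:R%:P) : {poly K})`_j.
Proof.
rewrite /stirling1 big_ord_recl /= addr0 coefXM /=.
rewrite -(coef_map_id0 (f := GRing.natmul (1 : K))) // rmorph_prod.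
congr (_ `_ j).
by under eq_bigr => i _ do rewrite rmorphD /= map_polyX map_polyC.
Qed.

Lemma prod_XsubC_shift n z :
  \prod_(i < n) ('X - (z - (i.+1)%:R)%:P) =
  (\prod_(i < n) ('X + (i.+1)%:R%:P)) \Po ('X + (- z)%:P).
Proof.
rewrite rmorph_prod; apply: eq_bigr => i _ /=.
by rewrite comp_polyD comp_polyX comp_polyC polyCB polyCN opprB addrA addrAC.
Qed.

Lemma sum_stirling1_shift n l z : (l <= n)%N ->
  \sum_(l <= j < n.+1) 'C(j, l)%:R * (stirling1 n.+1 j.+1)%:R * (- z) ^+ (j - l) =
  (-1) ^+ (n - l) *
    \sum_(A : {set 'I_n} | #|A| == (n - l)%N) \prod_(i in A) (z - (i.+1)%:R).
Proof.
move=> le_ln; set p : {poly K} := \prod_(i < n) ('X + (i.+1)%:R%:P).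
have size_p : size p = n.+1.
  rewrite /p (eq_bigr (fun i : 'I_n => 'X - (- (i.+1)%:R)%:P)).
    by rewrite size_prod_XsubC /index_enum -enumT size_enum_ord.
  by move=> i _; rewrite polyCN opprK.
rewrite -(@coef_prod_ord_XsubC n l (fun i => z - i.+1%:R)) // prod_XsubC_shift -/p.
rewrite coef_comp_XaddC size_p.
rewrite -(big_mkord xpredT (fun j => p`_j * ('C(j, l)%:R * (- z) ^+ (j - l)))).
rewrite [RHS](@big_cat_nat _ _ _ l) //=; last exact: ltnW.
rewrite [in RHS]big_nat_cond [in RHS]big1 ?add0r; last first.
  by move=> j /andP[/andP[_ /bin_small->] _]; rewrite !mul0r mulr0.
by apply: eq_bigr => j _; rewrite stirling1S_coef -/p -mulrA mulrCA.
Qed.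

End StirlingShift.

Lemma Pr_sum_subsets (R : realType) r l (z : R[i]) : (l < r)%N ->
  Pr r l z = (-1) ^+ (r.-1 - l) / (r.-1)`!%:R *
    \sum_(A : {set 'I_r.-1} | #|A| == (r.-1 - l)%N) \prod_(i in A) (z - (i.+1)%:R).
Proof.
by case: r => [//|n] /= lt_ln; rewrite /Pr /= sum_stirling1_shift // mulrA (mulrC _^-1).
Qed.

Section QLimits.
Variable R : realType.
(* [R[i]^o] carries the normed-field structure used by [cvgM] and [cvgV]. *)
Local Notation C := R[i]^o.

Lemma cvg_complex T (F : set_system T) (FF : Filter F) (f g : T -> R) (a b : R) :
  f @ F --> a -> g @ F --> b ->
  (fun x => (f x +i* g x)%C : C) @ F --> ((a +i* b)%C : C).
Proof.
move=> /cvgrPdist_lt fa /cvgrPdist_lt gb; apply/cvgrPdist_lt => -[e e'].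
rewrite ltcE /= => /andP[/eqP-> e_gt0].
have e2_gt0 : 0 < e / 2 by rewrite divr_gt0.
near=> x.
have /andP[fl fu] : - (e / 2) < a - f x < e / 2 by rewrite -ltr_norml; near: x; exact: fa.
have /andP[gl gu] : - (e / 2) < b - g x < e / 2 by rewrite -ltr_norml; near: x; exact: gb.
rewrite normc_def /= ltcR -[e]ger0_norm ?ltW // -sqrtr_sqr ltr_sqrt ?exprn_gt0 //.
rewrite !expr2; nra.
Unshelve. all: by end_near.
Qed.

Lemma cvg_diff_quotient_at_left (f : R -> R) (x d : R) :
  is_derive x 1 f d -> (fun q => (f q - f x) / (q - x)) @ x^'- --> d.
Proof.
case=> df <-; apply: cvg_trans df => P dP.
change (\forall q \near x, q < x -> P ((f q - f x) / (q - x))).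
have {}dP : \forall h \near 0, h != 0 -> P (h^-1 *: (f (h *: 1 + x) - f x)) := dP.
apply/nbhs0P; apply: filterS dP => h Ph lt_xh_x.
have h_neq0 : h != 0 by apply: contraTneq lt_xh_x => ->; rewrite addr0 ltxx.
have hA : h%:A = h :> R by rewrite /GRing.scale /= mulr1.
by move: (Ph h_neq0); rewrite hA (addrC x h) addrK mulrC.
Qed.

Lemma is_derive_mulr_ln1 (c : R) : is_derive (1 : R) 1 (fun q => c * ln q) c.
Proof.
have dln : is_derive (1 : R) 1 (@ln R) 1.
  by rewrite -[X in is_derive _ _ _ X]invr1; exact: is_derive1_ln.
by have := is_deriveZ c dln; rewrite /GRing.scale /= mulr1.
Qed.

Lemma is_derive_Re_cpow1 (w : R[i]) :
  is_derive (1 : R) 1 (fun q => complex.Re (cpow q w)) (complex.Re w).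
Proof.
case: w => a b /=.
have dexp := is_derive1_comp (is_derive_expR _) (is_derive_mulr_ln1 a).
have dcos := is_derive1_comp (is_derive_cos _) (is_derive_mulr_ln1 b).
apply: is_derive_eq (is_deriveM dexp dcos) _.
by rewrite /= ln1 !mulr0 expR0 cos0 sin0 /GRing.scale /=; lra.
Qed.

Lemma is_derive_Im_cpow1 (w : R[i]) :
  is_derive (1 : R) 1 (fun q => complex.Im (cpow q w)) (complex.Im w).
Proof.
case: w => a b /=.
have dexp := is_derive1_comp (is_derive_expR _) (is_derive_mulr_ln1 a).
have dsin := is_derive1_comp (is_derive_sin _) (is_derive_mulr_ln1 b).
apply: is_derive_eq (is_deriveM dexp dsin) _.
by rewrite /= ln1 !mulr0 expR0 cos0 sin0 /GRing.scale /=; lra.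
Qed.

Lemma cpow1 (w : R[i]) : cpow 1 w = 1.
Proof. by rewrite /cpow ln1 !mulr0 expR0 cos0 sin0 mulr1 mulr0. Qed.

Lemma qnum_diff_quotient (q : R) (w : R[i]) : q != 1 ->
  qnum q w = ((complex.Re (cpow q w) - complex.Re (cpow 1 w)) / (q - 1)
           +i* ((complex.Im (cpow q w) - complex.Im (cpow 1 w)) / (q - 1)))%C.
Proof.
move=> q_neq1; rewrite cpow1 /qnum /realC -[Complex (1 - q) 0]/((1 - q)%:C)%C -fmorphV.
have q1_neq0 : q - 1 != 0 by rewrite subr_eq0.
have q1'_neq0 : 1 - q != 0 by rewrite subr_eq0 eq_sym.
by case: (cpow q w) => u v; simpc => /=; congr Complex; field; rewrite q1_neq0 q1'_neq0.
Qed.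

Lemma qnum_cvg (w : R[i]) : (fun q => qnum q w : C) @ (1 : R)^'- --> (w : C).
Proof.
have qnumE : {near (1 : R)^'-,
    (fun q => ((complex.Re (cpow q w) - complex.Re (cpow 1 w)) / (q - 1)
           +i* ((complex.Im (cpow q w) - complex.Im (cpow 1 w)) / (q - 1)))%C : C)
    =1 (fun q => qnum q w : C)}.
  by near=> q; rewrite qnum_diff_quotient // lt_eqF //; near: q; exact: nbhs_left_lt.
apply: cvg_trans (near_eq_cvg qnumE) _; clear qnumE; case: w => a b.
by apply: cvg_complex; apply: cvg_diff_quotient_at_left;
  [exact: is_derive_Re_cpow1 | exact: is_derive_Im_cpow1].
Unshelve. all: by end_near.
Qed.

Lemma qfact_cvg n : (fun q => qfact q n : C) @ (1 : R)^'- --> (n`!%:R : C).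
Proof.
rewrite fact_prod natr_prod; apply: cvg_big => //; first exact: mul_continuous.
by move=> k _; exact: qnum_cvg.
Qed.

Lemma realC_exprn_cvg k : (fun q => realC (q ^+ k) : C) @ (1 : R)^'- --> (1 : C).
Proof.
apply: cvg_complex; last exact: cvg_cst.
by rewrite -[X in _ --> X](expr1n _ k); apply: cvg_at_left_filter; exact: exprn_continuous.
Qed.

Lemma sum_subsets_qterms_cvg n k (z : R[i]) :
  (fun q => \sum_(A : {set 'I_n} | #|A| == k)
     \prod_(i in A) (realC (q ^+ i.+1) * qnum q (z - (i.+1)%:R)) : C) @ (1 : R)^'- -->
  (\sum_(A : {set 'I_n} | #|A| == k) \prod_(i in A) (z - (i.+1)%:R) : C).
Proof.
apply: cvg_big => //; first exact: add_continuous.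
move=> A _; apply: cvg_big => //; first exact: mul_continuous.
move=> i _; rewrite -[X in _ --> X]mul1r.
by apply: cvgM; [exact: realC_exprn_cvg | exact: qnum_cvg].
Qed.

End QLimits.

Theorem lemma3p3 (R : realType) (r l : nat) (z : R[i]) :
  (l < r)%N ->
  (fun q : R => Pq q r l z) @ (1 : R)^'- --> Pr r l z.
Proof.
move=> lt_lr; rewrite Pr_sum_subsets // /Pq.
have fact_neq0 : ((r.-1)`!%:R : R[i]^o) != 0 by rewrite pnatr_eq0 -lt0n fact_gt0.
have inv_qfact_cvg := cvgV (FF := at_left_proper_filter 1) fact_neq0 (qfact_cvg R r.-1).
case: eqP => [->|_].
  under eq_bigl => A do rewrite subnn cards_eq0.
  by rewrite big_pred1_eq big_set0 subnn expr0 mul1r mulr1.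
apply: cvgM; first exact: cvgM (cvg_cst _) inv_qfact_cvg.
exact: sum_subsets_qterms_cvg.
Qed.
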